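(* Let ${\bf u}\in\mathcal A^{\mathbb N}$ be an infinite word with its language closed under reversal and $D({\bf u})<+\infty$. There exists a positive integer $K$ such that for every factor $w$ of ${\bf u}$ of length at least $K$: if $w$ is not a palindrome, then the graph $\Gamma(w)$ is a tree; if $w$ is a palindrome, then the graph $\Theta(w)$ is a tree.
   Context: $\widetilde w$ is the reversal of $w$; $w$ is a palindrome if $w=\widetilde w$. Palindromic defect: for a finite word $w$ of length $n$, $D(w)=n+1-$(number of distinct palindromic factors of $w$, including the empty word), and $D({\bf u})=\sup D(w)$ over factors of ${\bf u}$. The language is closed under reversal if the reversal of every factor is a factor. With $E^+(w)=\{b: wb\text{ factor}\}$, $E^-(w)=\{a: aw\text{ factor}\}$, $E(w)=\{(a,b): awb\text{ factor}\}$: $\Gamma(w)$ is the bipartite graph on $(E^-(w)\times\{-1\})\cup(E^+(w)\times\{+1\})$ with edges $\{(a,-1),(b,+1)\}$ for $(a,b)\in E(w)$; for palindromic $w$, $\Theta(w)$ is the graph on $E^+(w)$ with edges $\{a,b\}$ for $(a,b)\in E(w)$, $a\neq b$. *)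

From Stdlib Require ClassicalDescription.
From mathcomp Require Import all_boot.

Set Implicit Arguments.
Unset Strict Implicit.
Unset Printing Implicit Defensive.

Definition factor (A : Type) (u : nat -> A) (w : seq A) : Prop :=
  exists i : nat, w = mkseq (fun k => u (i + k)) (size w).

Definition factorb (A : Type) (u : nat -> A) (w : seq A) : bool :=
  if ClassicalDescription.excluded_middle_informative (factor u w) then true else false.

Definition palindrome (A : eqType) (w : seq A) : bool := w == rev w.

Definition factors_of (A : Type) (w : seq A) : seq (seq A) :=
  [seq take j (drop i w) | i <- iota 0 (size w).+1, j <- iota 0 (size w).+1].

(* number of distinct palindromic factors of w, including the empty word *)
Definition pal_count (A : eqType) (w : seq A) : nat :=
  size (undup (filter (@palindrome A) (factors_of w))).

Definition defect (A : eqType) (w : seq A) : nat := (size w).+1 - pal_count w.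

Definition finite_defect (A : eqType) (u : nat -> A) : Prop :=
  exists B : nat, forall w, factor u w -> defect w <= B.

Definition closed_under_reversal (A : Type) (u : nat -> A) : Prop :=
  forall w, factor u w -> factor u (rev w).

Definition connectedG (T : finType) (V : {set T}) (e : rel T) : Prop :=
  forall x y, x \in V -> y \in V ->
    connect (fun a b => [&& e a b, a \in V & b \in V]) x y.

Definition acyclicG (T : finType) (V : {set T}) (e : rel T) : Prop :=
  forall c : seq T, {subset c <= V} -> uniq c -> 3 <= size c -> ~~ cycle e c.

Definition is_tree (T : finType) (V : {set T}) (e : rel T) : Prop :=
  [/\ V != set0, connectedG V e & acyclicG V e].

(* ---- Gamma(w): bipartite graph; (a,false) encodes (a,-1), (b,true) encodes (b,+1) ---- *)
Definition Gamma_V (A : finType) (u : nat -> A) (w : seq A) : {set A * bool} :=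
  [set x : A * bool | if x.2 then factorb u (rcons w x.1) else factorb u (x.1 :: w)].

Definition Gamma_E (A : finType) (u : nat -> A) (w : seq A) : rel (A * bool) :=
  fun x y => (x.2 != y.2) &&
    (if x.2 then factorb u (y.1 :: rcons w x.1) else factorb u (x.1 :: rcons w y.1)).

Definition Theta_V (A : finType) (u : nat -> A) (w : seq A) : {set A} :=
  [set b : A | factorb u (rcons w b)].

Definition Theta_E (A : finType) (u : nat -> A) (w : seq A) : rel A :=
  fun a b => (a != b) &&
    (factorb u (a :: rcons w b) || factorb u (b :: rcons w a)).

(* Each new prefix of u contributes at most one new palindrome, and one exactly
   when its longest palindromic suffix is unioccurrent; so finite defect forces
   every long enough prefix to have a unioccurrent palindromic suffix.  With
   closure under reversal this makes every complete return to {p, rev p}, for p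
   long, a palindrome.  Reading the occurrences of w (and rev w) from left to
   right traces a walk in Gamma(w), resp. Theta(w), through all vertices and
   edges; palindromicity of the complete returns to w and to its one-letter
   extensions shows that the walk enters every vertex for the first time always
   through the same edge, so the graph is a tree. *)

From Stdlib Require Import Classical_Prop ClassicalDescription.
From mathcomp Require Import all_boot zify.

Set Implicit Arguments.
Unset Strict Implicit.
Unset Printing Implicit Defensive.

Lemma rev_cons_rcons (T : Type) (a b : T) s : rev (a :: rcons s b) = b :: rcons (rev s) a.
Proof. by rewrite rev_cons rev_rcons. Qed.

Section Slices.
Variables (A : eqType) (u : nat -> A).

Definition slice (i n : nat) : seq A := map u (iota i n).

Lemma size_slice i n : size (slice i n) = n.
Proof. by rewrite size_map size_iota. Qed.

Lemma nth_slice x0 i n k : k < n -> nth x0 (slice i n) k = u (i + k).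
Proof. by move=> kn; rewrite (nth_map 0) ?size_iota // nth_iota. Qed.

Lemma sliceS i n : slice i n.+1 = u i :: slice i.+1 n.
Proof. by []. Qed.

Lemma slice_rcons i n : slice i n.+1 = rcons (slice i n) (u (i + n)).
Proof. by rewrite -addn1 /slice iotaD map_cat cats1. Qed.

Lemma take_drop_slice i n a b :
  take b (drop a (slice i n)) = slice (i + a) (minn b (n - a)).
Proof. by rewrite /slice -map_drop -map_take drop_iota take_iota. Qed.

Lemma factor_sliceP w : factor u w <-> exists i, slice i (size w) = w.
Proof.
have mkseqE i n : mkseq (fun k => u (i + k)) n = slice i n.
  by rewrite /mkseq /slice -{2}(addn0 i) iotaDl -map_comp.
split=> -[i Ew]; exists i; first by rewrite -mkseqE -Ew.
by rewrite mkseqE Ew.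
Qed.

Lemma factor_slice i n : factor u (slice i n).
Proof. by apply/factor_sliceP; exists i; rewrite size_slice. Qed.

Lemma eq_sliceP i j n :
  slice i n = slice j n <-> forall k, k < n -> u (i + k) = u (j + k).
Proof.
split=> [E k kn|E].
  by rewrite -(nth_slice (u 0) i kn) -(nth_slice (u 0) j kn) E.
apply: (@eq_from_nth _ (u 0)); rewrite !size_slice // => k kn.
by rewrite !nth_slice // E.
Qed.

Lemma rev_sliceP i j n :
  rev (slice i n) = slice j n <-> forall k, k < n -> u (i + (n - k.+1)) = u (j + k).
Proof.
split=> [E k kn|E].
  rewrite -(nth_slice (u 0) j kn) -E nth_rev size_slice // nth_slice //; lia.
apply: (@eq_from_nth _ (u 0)); rewrite ?size_rev !size_slice // => k kn.
rewrite nth_rev size_slice // !nth_slice -?E //; lia.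
Qed.

Definition palindromic (s e : nat) : Prop :=
  forall k, s <= k < e -> u k = u (s + e - 1 - k).

Lemma slice_mirror s e k m n : palindromic s e -> s <= k -> s <= m ->
  k + n + m = s + e -> slice m n = rev (slice k n).
Proof.
move=> Pse sk sm kme; symmetry; apply/rev_sliceP => t tn.
by rewrite Pse; [congr u|]; lia.
Qed.

Lemma palindrome_sliceP i n : palindrome (slice i n) <-> palindromic i (i + n).
Proof.
rewrite /palindrome; split=> [/eqP E k /andP[ik kn]|P].
  have := proj1 (rev_sliceP i i n) (esym E) (k - i) ltac:(lia).
  by rewrite subnKC // => <-; congr u; lia.
by apply/eqP; symmetry; apply/rev_sliceP => k kn; rewrite P; [congr u|]; lia.
Qed.

Lemma mem_factors_sliceP e y : y \in factors_of (slice 0 e) <->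
  exists i, i + size y <= e /\ slice i (size y) = y.
Proof.
rewrite /factors_of size_slice; split.
  case/allpairsP=> -[i j] [ie je ->]; move: ie je; rewrite !mem_iota /= => ie je.
  exists i; rewrite take_drop_slice size_slice; split; first lia.
  by rewrite add0n.
move=> [i [ie Ey]]; apply/allpairsP; exists (i, size y).
by rewrite !mem_iota take_drop_slice /= -Ey size_slice; split; [lia|lia|congr slice; lia].
Qed.

Definition prefix_pals e := filter (@palindrome A) (factors_of (slice 0 e)).

Definition uniocc_pal_suffix e s := [/\ s <= e, palindromic s e &
  forall t, t < s -> slice t (e - s) <> slice s (e - s)].

Lemma new_prefix_pal e y : y \in prefix_pals e.+1 -> y \notin prefix_pals e ->
  exists2 i, i + size y = e.+1 & uniocc_pal_suffix e.+1 i /\ slice i (size y) = y.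
Proof.
rewrite !mem_filter => /andP[Py /mem_factors_sliceP [i [ie Ey]]]; rewrite Py /= => new.
have iy : i + size y = e.+1.
  apply/eqP; rewrite eqn_leq ie leqNgt; apply: contra new => lt.
  by apply/mem_factors_sliceP; exists i; split => //; lia.
exists i => //; split => //; rewrite /uniocc_pal_suffix (_ : e.+1 - i = size y); last lia.
split; first lia.
  by rewrite -iy; apply/palindrome_sliceP; rewrite Ey.
move=> t ti; rewrite Ey => Et; case/negP: new; apply/mem_factors_sliceP.
by exists t; split => //; lia.
Qed.

Lemma new_prefix_pal_unique e y1 y2 :
  y1 \in prefix_pals e.+1 -> y1 \notin prefix_pals e ->
  y2 \in prefix_pals e.+1 -> y2 \notin prefix_pals e -> y1 = y2.
Proof.
wlog le12 : y1 y2 / size y1 <= size y2.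
  move=> W; case: (leqP (size y1) (size y2)) => [|/ltnW] le N1 O1 N2 O2.
    exact: W.
  by symmetry; apply: W.
move=> N1 O1 N2 O2; have [i1 E1 [_ S1]] := new_prefix_pal N1 O1.
have [i2 E2 [[_ P2 _] S2]] := new_prefix_pal N2 O2.
case: (ltngtP (size y1) (size y2)) le12 => // [lt|eq] _; last first.
  by rewrite -S1 -S2 eq (_ : i1 = i2) //; lia.
case/negP: O1; move: N1; rewrite !mem_filter => /andP[P1 _].
rewrite P1; apply/mem_factors_sliceP; exists i2; split; first lia.
rewrite (slice_mirror (k := i1) P2) ?S1; try lia.
by move/eqP: P1.
Qed.

Definition prefix_pal_count e := pal_count (slice 0 e).

Lemma prefix_pal_count_step e :
  prefix_pal_count e.+1 <= (prefix_pal_count e).+1 /\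
  (~ (exists s, uniocc_pal_suffix e.+1 s) -> prefix_pal_count e.+1 <= prefix_pal_count e).
Proof.
rewrite /prefix_pal_count /pal_count -!/(prefix_pals _).
have [sub_old|] := boolP (all (mem (prefix_pals e)) (prefix_pals e.+1)).
  have le : size (undup (prefix_pals e.+1)) <= size (undup (prefix_pals e)).
    apply: uniq_leq_size (undup_uniq _) _ => y; rewrite !mem_undup.
    exact: (allP sub_old).
  by split=> //; apply: leqW.
case/allPn=> y0 new0 old0; have [i0 _ [uniocc _]] := new_prefix_pal new0 old0.
split; last by case; exists i0.
suff : size (undup (prefix_pals e.+1)) <= size (y0 :: undup (prefix_pals e)) by [].
apply: uniq_leq_size (undup_uniq _) _ => y; rewrite !mem_undup inE => newy.
have [oldy|oldy] := boolP (y \in prefix_pals e); first by rewrite mem_undup oldy orbT.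
by rewrite (new_prefix_pal_unique newy oldy new0 old0) eqxx.
Qed.

Lemma prefix_pal_count_le e : prefix_pal_count e <= e.+1.
Proof.
elim: e => [|e IH]; first by rewrite /prefix_pal_count /pal_count /factors_of /= /palindrome.
by have [le _] := prefix_pal_count_step e; apply: leq_trans le _.
Qed.

Definition prefix_defect e := defect (slice 0 e).

Lemma prefix_defectE e : prefix_defect e = e.+1 - prefix_pal_count e.
Proof. by rewrite /prefix_defect /defect size_slice. Qed.

Lemma prefix_defect_step e : prefix_defect e <= prefix_defect e.+1 /\
  (~ (exists s, uniocc_pal_suffix e.+1 s) -> prefix_defect e < prefix_defect e.+1).
Proof.
have [le lt] := prefix_pal_count_step e; have := prefix_pal_count_le e.
rewrite !prefix_defectE; split; [lia|move/lt; lia].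
Qed.

Lemma uniocc_pal_suffix_eventually :
  finite_defect u -> exists N, forall e, N < e -> exists s, uniocc_pal_suffix e s.
Proof.
move=> [B HB]; apply: NNPP => none.
have bad M : exists2 e, M < e & ~ exists s, uniocc_pal_suffix e.+1 s.
  apply: NNPP => nobad; apply: none; exists M.+1 => -[//|e] Me.
  by apply: NNPP => ne; apply: nobad; exists e.
have mono := homo_leq leqnn leq_trans (fun e => (prefix_defect_step e).1).
have big k : exists e, k <= prefix_defect e.
  elim: k => [|k [e ke]]; first by exists 0.
  have [e' ee' /(prefix_defect_step e').2 lt] := bad e.
  by exists e'.+1; apply: leq_ltn_trans lt; apply: leq_trans ke (mono _ _ (ltnW ee')).
have [e Be] := big B.+1.
by have := HB _ (factor_slice 0 e); rewrite -/(prefix_defect e) leqNgt Be.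
Qed.

Lemma uniocc_pal_suffix_long e s m j k : j < k -> k + m = e ->
  slice j m = slice k m \/ slice j m = rev (slice k m) ->
  uniocc_pal_suffix e s -> s + m < e.
Proof.
move=> jk kme Ejk [se Pal Uni]; rewrite ltnNge; apply/negP => short.
case: Ejk => Ejk.
  apply: (Uni (j + m - (e - s))); first lia.
  apply/eq_sliceP => t tL.
  have -> : j + m - (e - s) + t = j + (m - (e - s) + t) by lia.
  by rewrite (proj1 (eq_sliceP j k m) Ejk); [congr u|]; lia.
apply: (Uni j); first lia.
apply/eq_sliceP => t tL.
rewrite -(proj1 (rev_sliceP k j m) (esym Ejk)); last lia.
by rewrite Pal; [congr u|]; lia.
Qed.

Definition occurs_mod_rev (p : seq A) k :=
  (slice k (size p) == p) || (slice k (size p) == rev p).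

Lemma occurs_mod_revP p k :
  reflect (slice k (size p) = p \/ slice k (size p) = rev p) (occurs_mod_rev p k).
Proof. by apply: (iffP orP) => -[] /eqP; auto. Qed.

Lemma occurs_mod_rev_related p j k : occurs_mod_rev p j -> occurs_mod_rev p k ->
  slice j (size p) = slice k (size p) \/ slice j (size p) = rev (slice k (size p)).
Proof. by case/occurs_mod_revP=> -> /occurs_mod_revP[]->; rewrite ?revK; auto. Qed.

Lemma occurs_mod_rev_mirror p s e k m : palindromic s e -> s <= k -> s <= m ->
  k + size p + m = s + e -> occurs_mod_rev p k -> occurs_mod_rev p m.
Proof.
move=> Pse sk sm kme; rewrite /occurs_mod_rev (slice_mirror Pse sk sm kme).
by case/occurs_mod_revP=> ->; rewrite ?revK eqxx ?orbT.
Qed.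

End Slices.

Section CompleteReturns.
Variables (A : eqType) (u : nat -> A) (N : nat).
Hypothesis uniocc : forall e, N < e -> exists s, uniocc_pal_suffix u e s.
Local Notation slice := (slice u).
Local Notation occurs := (occurs_mod_rev u).

Lemma complete_return_palindromic p j j' : N < size p -> j < j' ->
  occurs p j -> occurs p j' -> (forall k, j < k < j' -> ~~ occurs p k) ->
  palindromic u j (j' + size p).
Proof.
move=> Np; elim/ltn_ind: j' j => j' IH j jj' Oj Oj' gap.
have [s U] := uniocc (e := j' + size p) ltac:(lia); have [_ Pal _] := U.
have long := uniocc_pal_suffix_long jj' erefl (occurs_mod_rev_related Oj Oj') U.
have Os : occurs p s by apply: (occurs_mod_rev_mirror Pal _ _ _ Oj'); lia.
case: (ltngtP s j) => [sj|js|<- //]; last first.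
  by move: (gap s ltac:(lia)); rewrite Os.
have Ot : occurs p (s + j' - j) by apply: (occurs_mod_rev_mirror Pal _ _ _ Oj); lia.
have Pst : palindromic u s (s + j' - j + size p).
  apply: IH Os Ot _ => [||k kt]; try lia.
  apply/negP => Ok; have := gap (s + j' - k) ltac:(lia).
  by rewrite (occurs_mod_rev_mirror Pal _ _ _ Ok) //; lia.
move=> k kj; rewrite Pal; last lia.
rewrite Pst; last lia.
by rewrite Pal; [congr u|]; lia.
Qed.

Lemma return_letter_mirror (a : A) p i i' : N < size p -> 0 < i < i' ->
  slice i (size p) = p -> slice i' (size p) = rev p ->
  u (i - 1) = a -> u (i' + size p) = a ->
  (forall k, i <= k < i' -> slice k (size p) = rev p -> u (k + size p) <> a) ->
  (forall k, i < k <= i' -> slice k (size p) = p -> u (k - 1) <> a) ->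
  u (i' - 1) = u (i + size p).
Proof.
move=> Np ii' Si Si' ai ai' no_rev no_fwd.
have Sa k : slice k (size (a :: p)) = u k :: slice k.+1 (size p) by [].
have Sr k : slice k (size (a :: p)) = rcons (slice k (size p)) (u (k + size p)).
  exact: slice_rcons.
have Pal : palindromic u (i - 1) (i' + size (a :: p)).
  apply: complete_return_palindromic => /=; try lia.
  - by apply/occurs_mod_revP; left; rewrite Sa ai (_ : (i - 1).+1 = i) ?Si //; lia.
  - by apply/occurs_mod_revP; right; rewrite Sr Si' ai' rev_cons.
  move=> k kk; apply/negP => /occurs_mod_revP[].
    rewrite Sa => -[uka Sk]; apply: (no_fwd k.+1) Sk _; first lia.
    by rewrite subn1.
  by rewrite Sr rev_cons => /rcons_inj[Sk uka]; apply: (no_rev k) Sk uka; lia.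
by rewrite Pal /=; [congr u|]; lia.
Qed.

End CompleteReturns.

Lemma last_before (P : pred nat) a b : P a -> a < b ->
  exists j, [/\ a <= j < b, P j & forall k, j < k < b -> ~~ P k].
Proof.
move=> Pa ab; have ex : exists j, P j && (j < b) by exists a; rewrite Pa.
have ub j : P j && (j < b) -> j <= b by case/andP=> _ /ltnW.
case: (ex_maxnP ex ub) => j /andP[Pj jb] max.
exists j; split=> // [|k /andP[jk kb]]; first by rewrite jb andbT max ?Pa.
by apply: contraTN jk => Pk; rewrite -leqNgt max ?Pk.
Qed.

Lemma first_after (P : pred nat) a b : P b -> a < b ->
  exists j, [/\ a < j <= b, P j & forall k, a < k < j -> ~~ P k].
Proof.
move=> Pb ab; have ex : exists j, (a < j) && P j by exists b; rewrite ab.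
case: (ex_minnP ex) => j /andP[aj Pj] min.
exists j; split=> // [|k /andP[ak kj]]; first by rewrite aj min ?ab.
by apply: contraTN kj => Pk; rewrite -leqNgt min ?ak.
Qed.

Lemma cycle_neighbours (T : eqType) (e : rel T) (c : seq T) v :
  uniq c -> v \in c -> 2 < size c -> cycle e c ->
  exists a b, [/\ a \in c, b \in c, a != b & [/\ a != v, b != v, e v a & e b v]].
Proof.
move=> uc /rot_to[i s rotc] sc cyc.
have {uc}: uniq (v :: s) by rewrite -rotc rot_uniq.
have {cyc}: cycle e (v :: s) by rewrite -rotc rot_cycle.
have {sc}: 2 < size (v :: s) by rewrite -rotc size_rot.
have mem x : x \in v :: s -> x \in c by rewrite -rotc mem_rot.
case: s {rotc} mem => [|a [|b t]] // mem _.
rewrite /cycle rcons_path /= => /andP[/andP[eva _] ebv] /and3P[va ab _].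
have lastc : last b t \in b :: t by apply: mem_last.
exists a, (last b t); split; last split => //.
- by apply: mem; rewrite !inE eqxx orbT.
- by apply: mem; rewrite 2!in_cons lastc !orbT.
- by apply: contraNneq ab => ->.
- by apply: contraNneq va => ->; rewrite inE eqxx.
- by apply: contraNneq va => <-; rewrite in_cons lastc orbT.
Qed.

(* An abstract walk: the times [j] with [O j] are the steps, step [j] goes from
   [al j] to [be j] along an edge (or stays put), and consecutive steps are
   chained by [occ_next]. *)
Section WalkTree.
Variables (T : finType) (V : {set T}) (E : rel T) (O : pred nat) (al be : nat -> T).
Hypothesis E_sym : symmetric E.
Hypothesis occ_edge : forall j, O j ->
  [/\ al j \in V, be j \in V & al j = be j \/ E (al j) (be j)].
Hypothesis occ_next : forall j j', O j -> O j' -> j < j' ->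
  (forall k, j < k < j' -> ~~ O k) -> be j = al j'.
Hypothesis occ_onto : forall v, v \in V -> exists2 j, O j & be j = v.
Hypothesis occ_return : forall i i', O i -> O i' -> i < i' -> al i = be i' ->
  (forall j, i <= j < i' -> O j -> be j <> al i) ->
  (forall j, i < j <= i' -> O j -> al j <> al i) -> al i' = be i.
Hypothesis occ_edge_onto : forall x y, x \in V -> y \in V -> E x y ->
  exists i j0, [/\ O i, O j0, j0 < i & al i = x /\ be i = y \/ al i = y /\ be i = x].

Let adjV := [rel a b | [&& E a b, a \in V & b \in V]].

Lemma walk_connect j1 j : O j1 -> O j -> j1 <= j -> connect adjV (be j1) (be j).
Proof.
move=> O1; elim/ltn_ind: j => j IH Oj; rewrite leq_eqVlt => /predU1P[-> //|j1j].
have [j' [/andP[j1j' j'j] Oj' gap]] := last_before O1 j1j.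
apply: connect_trans (IH j' j'j Oj' j1j') _; rewrite (occ_next Oj' Oj j'j gap).
have [alV beV [-> //|Eab]] := occ_edge Oj.
by apply: connect1; rewrite /= Eab alV beV.
Qed.

Lemma walk_connected : connectedG V E.
Proof.
move=> x y /occ_onto[jx Ox <-] /occ_onto[jy Oy <-].
have sym : connect_sym adjV.
  by apply: sym_connect_sym => a b /=; rewrite E_sym [(a \in V) && _]andbC.
case: (leqP jx jy) => [le|/ltnW le]; first exact: walk_connect.
by rewrite sym; apply: walk_connect.
Qed.

Definition first_entry v : nat :=
  if excluded_middle_informative (exists j, O j && (be j == v)) is left ex
  then ex_minn ex else 0.

Lemma first_entryP v j : O j -> be j = v ->
  [/\ O (first_entry v), be (first_entry v) = v & first_entry v <= j].
Proof.
move=> Oj bej; rewrite /first_entry.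
case: excluded_middle_informative => [ex|nex]; last first.
  by case: nex; exists j; rewrite Oj bej eqxx.
by case: ex_minnP => m /andP[Om /eqP bem] min; split=> //; apply: min; rewrite Oj bej eqxx.
Qed.

Lemma first_entry_edge i x y j0 : x <> y -> O i -> al i = x -> be i = y -> O j0 -> j0 < i ->
  first_entry x < first_entry y /\ al (first_entry y) = x \/
  first_entry y < first_entry x /\ al (first_entry x) = y.
Proof.
elim/ltn_ind: i x y j0 => i IH x y j0 xy Oi ali bei Oj0 j0i.
have [OFy beFy Fyi] := first_entryP Oi bei.
case: (ltngtP (first_entry y) i) Fyi => [Fyi|//|Fyi] _; last first.
  have [j' [/andP[_ j'i] Oj' gap]] := last_before Oj0 j0i.
  have [_ _ Fxj'] := first_entryP Oj' (etrans (occ_next Oj' Oi j'i gap) ali).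
  by left; rewrite Fyi ali; split=> //; apply: leq_ltn_trans Fxj' j'i.
pose Py j := O j && (be j == y).
have PyFy : Py (first_entry y) by rewrite /Py OFy beFy eqxx.
have [m [/andP[_ mi] /andP[Om /eqP bem] no_y]] := last_before PyFy Fyi.
have [m' [/andP[mm' m'i] Om' gap]] := first_after Oi mi.
have alm' : al m' = y by rewrite -(occ_next Om Om' mm' gap).
have m'i' : m' < i.
  by rewrite ltn_neqAle m'i andbT; apply/eqP => m'E; apply: xy; rewrite -ali -alm' m'E.
have bem' : be m' = x.
  rewrite -ali; symmetry; apply: occ_return => //; first by rewrite alm' bei.
  - move=> j /andP[m'j ji] Oj; rewrite alm' => bej.
    by have /negP[] := no_y j ltac:(lia); rewrite /Py Oj bej eqxx.
  - move=> j /andP[m'j ji] Oj.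
    have [j'' [/andP[m'j'' j''j] Oj'' gap'']] := last_before Om' m'j.
    rewrite -(occ_next Oj'' Oj j''j gap'') alm' => bej''.
    by have /negP[] := no_y j'' ltac:(lia); rewrite /Py Oj'' bej'' eqxx.
have [] := IH m' m'i' y x m (nesym xy) Om' alm' bem' Om mm'; by [right | left].
Qed.

Lemma walk_acyclic : acyclicG V E.
Proof.
move=> c cV uc sc; apply/negP => cyc.
have [v0 v0c] : exists v0, v0 \in c.
  by case: c sc {cV uc cyc} => // x c; exists x; rewrite inE eqxx.
case: (arg_maxnP first_entry v0c) => v vc vmax.
have [a [b [ac bc ab [av bv Eva Ebv]]]] := cycle_neighbours uc vc sc cyc.
have entry w : w \in c -> w != v -> E v w -> al (first_entry v) = w.
  move=> wc /eqP wv Evw.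
  have [i [j0 [Oi Oj0 j0i [[ali bei]|[ali bei]]]]] := occ_edge_onto (cV _ vc) (cV _ wc) Evw.
    have [[lt _]|[_ //]] := first_entry_edge (nesym wv) Oi ali bei Oj0 j0i.
    by have := vmax w wc; rewrite /= leqNgt lt.
  have [[_ //]|[lt _]] := first_entry_edge wv Oi ali bei Oj0 j0i.
  by have := vmax w wc; rewrite /= leqNgt lt.
by move: ab; rewrite -(entry a ac av Eva) -(entry b bc bv) ?eqxx // E_sym.
Qed.

Lemma walk_tree : V != set0 -> is_tree V E.
Proof. by move=> V0; split=> //; [apply: walk_connected | apply: walk_acyclic]. Qed.

End WalkTree.

Section Extensions.
Variables (A : eqType) (u : nat -> A).
Hypothesis closed : closed_under_reversal u.
Local Notation slice := (slice u).

Lemma factorbP w : reflect (factor u w) (factorb u w).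
Proof. by rewrite /factorb; case: excluded_middle_informative => ?; constructor. Qed.

(* rev u[0, i + n) occurs at some q, and reversing u[q, q + i + n] puts a copy
   of u[0, i + n) at position q' + 1 > 0. *)
Lemma slice_recurs i n : exists2 i', i < i' & slice i' n = slice i n.
Proof.
have /factor_sliceP[q] := closed (factor_slice u 0 (i + n)).
rewrite size_rev size_slice => Eq.
have /factor_sliceP[q'] := closed (factor_slice u q (i + n).+1).
rewrite size_rev size_slice (slice_rcons u q) Eq rev_rcons revK sliceS => -[_ Eq'].
exists (q'.+1 + i); first lia.
apply/eq_sliceP => k kn; rewrite -addnA.
by apply: (proj1 (eq_sliceP u _ _ _) Eq'); lia.
Qed.

Lemma slice_cons_rconsE p a w b : slice p (size w).+2 = a :: rcons w b ->
  [/\ u p = a, slice p.+1 (size w) = w & u (p.+1 + size w) = b].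
Proof. by rewrite sliceS slice_rcons => -[-> /rcons_inj[-> ->]]. Qed.

Lemma factor_rcons_occ w b : factor u (rcons w b) ->
  exists j, [/\ 0 < j, slice j (size w) = w & u (j + size w) = b].
Proof.
case/factor_sliceP=> p; rewrite size_rcons => Ep; have [j pj] := slice_recurs p (size w).+1.
by rewrite Ep slice_rcons => /rcons_inj[Ej ujb]; exists j; split => //; lia.
Qed.

Lemma factor_cons_rcons_occ a w b : factor u (a :: rcons w b) ->
  exists j0 j, [/\ 0 < j0 < j, slice j0 (size w) = w, slice j (size w) = w,
                   u (j - 1) = a & u (j + size w) = b].
Proof.
case/factor_sliceP=> p; rewrite /= size_rcons => Ep; have [j pj] := slice_recurs p (size w).+2.
rewrite Ep => /slice_cons_rconsE[uja Ej ujb]; have [_ Ep' _] := slice_cons_rconsE Ep.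
by exists p.+1, j.+1; rewrite subn1 /=; split => //; lia.
Qed.

Lemma factor_extensions j n : 0 < j ->
  [/\ factor u (u (j - 1) :: slice j n), factor u (rcons (slice j n) (u (j + n))) &
      factor u (u (j - 1) :: rcons (slice j n) (u (j + n)))].
Proof.
move=> j0; have jE : (j - 1).+1 = j by lia.
split; first by rewrite -{2}jE -sliceS; apply: factor_slice.
  by rewrite -slice_rcons; apply: factor_slice.
by rewrite -slice_rcons -{2}jE -sliceS; apply: factor_slice.
Qed.

End Extensions.

Section ExtensionGraphs.
Variables (A : finType) (u : nat -> A) (N : nat) (w : seq A).
Hypothesis closed : closed_under_reversal u.
Hypothesis uniocc : forall e, N < e -> exists s, uniocc_pal_suffix u e s.
Hypothesis Fw : factor u w.
Hypothesis Nw : N < size w.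
Local Notation slice := (slice u).
Local Notation n := (size w).

(* Position 0 is excluded so that [u (j - 1)] is a genuine left neighbour. *)
Definition occ j := (0 < j) && occurs_mod_rev u w j.

Lemma occ_next_palindromic j j' : occ j -> occ j' -> j < j' ->
  (forall k, j < k < j' -> ~~ occ k) -> palindromic u j (j' + n).
Proof.
move=> /andP[j0 Oj] /andP[_ Oj'] jj' gap.
apply: (complete_return_palindromic uniocc) => // k jkj'.
by have := gap k jkj'; rewrite /occ (_ : 0 < k) //; lia.
Qed.

Lemma occ_slice j : occ j -> 0 < j /\ (slice j n = w \/ slice j n = rev w).
Proof. by case/andP=> j0 /occurs_mod_revP. Qed.

Lemma occ_exists : exists j, occ j.
Proof.
case/factor_sliceP: Fw => p Ep; have [j pj Ej] := slice_recurs closed p n.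
by exists j; rewrite /occ /occurs_mod_rev Ej Ep eqxx; lia.
Qed.

Section Theta.
Hypothesis Pw : palindrome w.

Let revw : rev w = w. Proof. by move/eqP: Pw. Qed.

Lemma theta_occE j : occ j = (0 < j) && (slice j n == w).
Proof. by rewrite /occ /occurs_mod_rev revw orbb. Qed.

Let al j := u (j - 1).
Let be j := u (j + n).

Lemma theta_sym : symmetric (Theta_E u w).
Proof. by move=> a b; rewrite /Theta_E eq_sym orbC. Qed.

Lemma theta_occ_edge j : occ j -> [/\ al j \in Theta_V u w, be j \in Theta_V u w &
  al j = be j \/ Theta_E u w (al j) (be j)].
Proof.
rewrite theta_occE => /andP[j0 /eqP Ej]; have [Fa Fb Fab] := factor_extensions u n j0.
rewrite Ej in Fa Fb Fab; rewrite !inE; split.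
- by apply/factorbP; have := closed Fa; rewrite rev_cons revw.
- exact/factorbP.
case: (eqVneq (al j) (be j)) => [|ab]; [by left|right].
by rewrite /Theta_E ab; apply/orP; left; apply/factorbP.
Qed.

Lemma theta_occ_next j j' : occ j -> occ j' -> j < j' ->
  (forall k, j < k < j' -> ~~ occ k) -> be j = al j'.
Proof.
move=> Oj Oj' jj' gap; have Pal := occ_next_palindromic Oj Oj' jj' gap.
by rewrite /be /al Pal; [congr u|]; lia.
Qed.

Lemma theta_occ_onto v : v \in Theta_V u w -> exists2 j, occ j & be j = v.
Proof.
rewrite inE => /factorbP/(factor_rcons_occ closed)[j [j0 Ej ujv]].
by exists j; rewrite // theta_occE j0 Ej eqxx.
Qed.

Lemma theta_occ_return i i' : occ i -> occ i' -> i < i' -> al i = be i' ->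
  (forall j, i <= j < i' -> occ j -> be j <> al i) ->
  (forall j, i < j <= i' -> occ j -> al j <> al i) -> al i' = be i.
Proof.
rewrite !theta_occE => /andP[i0 /eqP Ei] /andP[_ /eqP Ei'] ii' ali no_be no_al.
apply: (return_letter_mirror uniocc (a := al i)) => //; rewrite ?revw //; try lia.
- move=> k /andP[ik ki'] Ek; apply: no_be; first lia.
  by rewrite theta_occE Ek eqxx andbT; lia.
move=> k /andP[ik ki'] Ek; apply: no_al; first lia.
by rewrite theta_occE Ek eqxx andbT; lia.
Qed.

Lemma theta_occ_edge_onto x y : x \in Theta_V u w -> y \in Theta_V u w ->
  Theta_E u w x y -> exists i j0,
  [/\ occ i, occ j0, j0 < i & al i = x /\ be i = y \/ al i = y /\ be i = x].
Proof.
move=> _ _ /andP[_ /orP[]] /factorbP/(factor_cons_rcons_occ closed)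
  [j0 [j [/andP[j00 j0j] Ej0 Ej uja ujb]]];
  by exists j, j0; rewrite !theta_occE Ej0 Ej !eqxx; split; auto; lia.
Qed.

Lemma theta_tree : is_tree (Theta_V u w) (Theta_E u w).
Proof.
apply: (walk_tree theta_sym theta_occ_edge theta_occ_next theta_occ_onto
  theta_occ_return theta_occ_edge_onto).
have [j Oj] := occ_exists; have [_ beV _] := theta_occ_edge Oj.
by apply/set0Pn; exists (be j).
Qed.

End Theta.

Section Gamma.
Hypothesis NPw : ~~ palindrome w.

Let wrev : (rev w == w) = false.
Proof. by apply/negbTE; rewrite eq_sym. Qed.

Lemma rev_eq_w s : s = w \/ s = rev w -> (rev s == w) = (s != w).
Proof. by case=> ->; rewrite ?revK ?eqxx ?wrev. Qed.

(* An occurrence of rev w at j reads, reversed, as w followed by u (j - 1) and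
   preceded by u (j + n): its extensions are the vertices (u (j - 1), +1) and
   (u (j + n), -1), with the sign encoded by the boolean. *)
Let al j := (u (j - 1), slice j n != w).
Let be j := (u (j + n), slice j n == w).

Lemma gamma_sym : symmetric (Gamma_E u w).
Proof. by case=> a [] [b []]. Qed.

Lemma gamma_occ_edge j : occ j -> [/\ al j \in Gamma_V u w, be j \in Gamma_V u w &
  al j = be j \/ Gamma_E u w (al j) (be j)].
Proof.
case/occ_slice=> j0 Ej; have [Fa Fb Fab] := factor_extensions u n j0.
rewrite !inE /al /be; split; last right; rewrite /Gamma_E /=;
  case: Ej => Ej; rewrite Ej ?eqxx ?wrev /= in Fa Fb Fab *; apply/factorbP => //.
- by have := closed Fa; rewrite rev_cons revK.
- by have := closed Fb; rewrite rev_rcons revK.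
by have := closed Fab; rewrite rev_cons_rcons revK.
Qed.

Lemma gamma_occ_next j j' : occ j -> occ j' -> j < j' ->
  (forall k, j < k < j' -> ~~ occ k) -> be j = al j'.
Proof.
move=> Oj Oj' jj' gap; have Pal := occ_next_palindromic Oj Oj' jj' gap.
have [_ Ej] := occ_slice Oj.
rewrite /be /al (slice_mirror Pal (k := j) (m := j')) ?(rev_eq_w Ej) ?negbK; try lia.
by rewrite Pal; [congr (u _, _)|]; lia.
Qed.

Lemma gamma_occ_onto v : v \in Gamma_V u w -> exists2 j, occ j & be j = v.
Proof.
case: v => a []; rewrite inE /= => /factorbP.
  case/(factor_rcons_occ closed)=> j [j0 Ej uja].
  by exists j; [rewrite /occ /occurs_mod_rev Ej eqxx j0 | rewrite /be Ej uja eqxx].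
move/closed; rewrite rev_cons => /(factor_rcons_occ closed)[j [j0]].
rewrite size_rev => Ej uja.
by exists j; [rewrite /occ /occurs_mod_rev Ej eqxx orbT j0 | rewrite /be Ej uja wrev].
Qed.

Lemma gamma_occ_return i i' : occ i -> occ i' -> i < i' -> al i = be i' ->
  (forall j, i <= j < i' -> occ j -> be j <> al i) ->
  (forall j, i < j <= i' -> occ j -> al j <> al i) -> al i' = be i.
Proof.
move=> Oi Oi' ii' [ai flip] no_be no_al.
have [i0 Ei] := occ_slice Oi; have [_ Ei'] := occ_slice Oi'.
have Ei'r : slice i' n = rev (slice i n).
  by move: flip; case: Ei => ->; case: Ei' => ->; rewrite ?revK ?eqxx ?wrev.
have occE k : slice k n = slice i n \/ slice k n = rev (slice i n) -> 0 < k -> occ k.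
  move=> Ek k0; rewrite /occ k0; apply/occurs_mod_revP.
  by case: Ei Ek => -> [] ->; rewrite ?revK; auto.
have := return_letter_mirror uniocc (a := u (i - 1)) (p := slice i n) (i := i) (i' := i').
rewrite size_slice => /(_ Nw _ erefl Ei'r erefl (esym ai)) mirror.
rewrite /al /be Ei'r (rev_eq_w Ei) negbK mirror //; [lia| |].
- move=> k /andP[ik ki'] Ek ukn; apply: (no_be k); [lia|apply: occE; auto; lia|].
  by rewrite /be /al ukn Ek (rev_eq_w Ei).
move=> k /andP[ik ki'] Ek uk1; apply: (no_al k); [lia|apply: occE; auto; lia|].
by rewrite /al uk1 Ek.
Qed.

Lemma gamma_occ_edge_onto x y : x \in Gamma_V u w -> y \in Gamma_V u w ->
  Gamma_E u w x y -> exists i j0,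
  [/\ occ i, occ j0, j0 < i & al i = x /\ be i = y \/ al i = y /\ be i = x].
Proof.
move: x y => [a []] [b []] _ _ //= /factorbP/(factor_cons_rcons_occ closed)
  [j0 [j [/andP[j00 j0j] Ej0 Ej uja ujb]]];
  exists j, j0; rewrite /occ /occurs_mod_rev /al /be Ej0 Ej uja ujb !eqxx /=;
  by split; auto; lia.
Qed.

Lemma gamma_tree : is_tree (Gamma_V u w) (Gamma_E u w).
Proof.
apply: (walk_tree gamma_sym gamma_occ_edge gamma_occ_next gamma_occ_onto
  gamma_occ_return gamma_occ_edge_onto).
have [j Oj] := occ_exists; have [_ beV _] := gamma_occ_edge Oj.
by apply/set0Pn; exists (be j).
Qed.

End Gamma.
End ExtensionGraphs.

Theorem corollary22 (A : finType) (u : nat -> A) :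
  closed_under_reversal u -> finite_defect u ->
  exists K : nat, 0 < K /\
    forall w : seq A, factor u w -> K <= size w ->
      (~~ palindrome w -> is_tree (Gamma_V u w) (Gamma_E u w)) /\
      (palindrome w -> is_tree (Theta_V u w) (Theta_E u w)).
Proof.
move=> closed /uniocc_pal_suffix_eventually[N uniocc].
exists N.+1; split=> // w Fw Nw; split=> [NPw|Pw].
- exact: gamma_tree closed uniocc Fw Nw NPw.
- exact: theta_tree closed uniocc Fw Nw Pw.
Qed.
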